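(* Let $p(z)=\sum_{i=0}^da_iz^i$ be a complex polynomial of degree $d\ge2$ such that $0$ is a periodic point of period $m_0$ with multiplier $\rho:=(p^{m_0})'(0)$, let $t_0\ge1$, $m_1:=m_0t_0$ and $b_i:=(p^{m_1-i-1})'(p^{i+1}(0))$ for $0\le i\le m_1-1$. Let $q$ be a polynomial, $\epsilon\in\mathbb{C}^*$, and for $s\in\mathbb{D}^*$ let $f(z,w):=(p(z)+s\epsilon w,q(w))$ and $g:=\phi^{-1}\circ f\circ\phi$ with $\phi(z,w)=(sz,w)$. Then for every $l\ge1$ there exists a polynomial $E_l$ in $(s,z,w)$ such that $$g^{m_1l}(z,w)=\Big(\rho^{t_0l}z+\epsilon\sum_{i=0}^{m_1-1}b_i\sum_{k=0}^{l-1}\rho^{t_0k}q^{i+(l-1-k)m_1}(w)+sE_l(s,z,w),\ q^{m_1l}(w)\Big).$$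
   Context: $\mathbb{D}^*$ is the punctured unit disc. Note $g(z,w)=(a_0s^{-1}+a_1z+\epsilon w+sE(s,z,w),q(w))$ with $E$ polynomial. *)

From mathcomp Require Import all_boot all_order all_algebra.
From mathcomp Require Import mpoly.
Set Implicit Arguments. Unset Strict Implicit. Unset Printing Implicit Defensive.
Import Order.TTheory GRing.Theory Num.Theory.
Local Open Scope ring_scope.

Definition piter (C : numClosedFieldType) (p : {poly C}) (n : nat) : {poly C} :=
  iter n (fun r => p \Po r) 'X.

Definition qiter (C : numClosedFieldType) (q : {poly C}) (n : nat) (w : C) : C :=
  iter n (fun x => q.[x]) w.

Definition periodic0 (C : numClosedFieldType) (p : {poly C}) (m0 : nat) : Prop :=
  (0 < m0)%N /\ (piter p m0).[0] = 0 /\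
  forall k, (0 < k < m0)%N -> (piter p k).[0] != 0.

Definition multiplier (C : numClosedFieldType) (p : {poly C}) (m0 : nat) : C :=
  (piter p m0)^`().[0].

Definition bcoef (C : numClosedFieldType) (p : {poly C}) (m1 i : nat) : C :=
  (piter p (m1 - i - 1))^`().[(piter p i.+1).[0]].

Definition fmap (C : numClosedFieldType) (p q : {poly C}) (eps s : C)
  (x : C * C) : C * C := (p.[x.1] + s * eps * x.2, q.[x.2]).

Definition phimap (C : numClosedFieldType) (s : C) (x : C * C) : C * C :=
  (s * x.1, x.2).
Definition phiinv (C : numClosedFieldType) (s : C) (x : C * C) : C * C :=
  (x.1 / s, x.2).

Definition gmap (C : numClosedFieldType) (p q : {poly C}) (eps s : C)
  (x : C * C) : C * C := phiinv s (fmap p q eps s (phimap s x)).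

Definition eval3 (C : numClosedFieldType) (E : {mpoly C[3]}) (s z w : C) : C :=
  E.@[fun i : 'I_3 => nth 0 [:: s; z; w] i].

(* Write the k-th iterate of g as (p^k(0)/s + R_k, q^k(w)).  Since
   s (p^k(0)/s + R_k) = p^k(0) + s R_k, a second-order Taylor expansion of p at
   p^k(0) gives R_(k+1) = p'(p^k(0)) R_k + eps q^k(w) + s (polynomial), so modulo s
   the R_k solve a linear recursion whose solution is
   (p^k)'(0) z + eps sum_(j<k) (p^(k-1-j))'(p^(j+1)(0)) q^j(w).
   For k = m1 l periodicity kills p^k(0), the chain rule turns (p^k)'(0) into
   rho^(t0 l), and cutting j = i + n m1 into blocks of length m1 factors each
   coefficient as rho^(t0 k) b_i. *)

From mathcomp Require Import all_boot all_order all_algebra.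
From mathcomp Require Import mpoly.
From mathcomp Require Import ring zify.
Import Order.TTheory GRing.Theory Num.Theory.
Set Implicit Arguments. Unset Strict Implicit. Unset Printing Implicit Defensive.
Local Open Scope ring_scope.

Lemma sum_ord_mul (V : nmodType) m l (F : nat -> V) :
  \sum_(j < m * l) F j = \sum_(i < m) \sum_(n < l) F (i + n * m)%N.
Proof.
elim: l => [|l IH]; first by rewrite muln0 big_ord0 big1 // => i _; rewrite big_ord0.
rewrite mulnSr big_split_ord /= IH -big_split /=.
by apply: eq_bigr => i _; rewrite big_ord_recr /= addnC mulnC.
Qed.

Lemma horner_taylor2 (R : comNzRingType) (P : {poly R}) (c : R) :
  exists u : {poly R}, forall x,
    P.[x] = P.[c] + (x - c) * P^`().[c] + (x - c) ^+ 2 * u.[x].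
Proof.
have factor_at (Q : {poly R}) : exists r, Q = Q.[c]%:P + r * ('X - c%:P).
  have /factor_theorem [r hr] : root (Q - Q.[c]%:P) c.
    by rewrite /root hornerD hornerN hornerC subrr.
  by exists r; rewrite -hr addrC subrK.
have [r hr] := factor_at P; have [u hu] := factor_at r.
have dP : P^`().[c] = r.[c].
  rewrite hr derivD derivC add0r derivM derivXsubC mulr1 hornerD hornerM.
  by rewrite hornerXsubC subrr mulr0 add0r.
exists u => x; rewrite {1}hr {1}hu dP !(hornerE, hornerXsubC); ring.
Qed.

Section PolynomialFunctions.

Variable C : numClosedFieldType.

Definition mpoly_fun (f : C -> C -> C -> C) :=
  exists E : {mpoly C[3]}, forall s z w, f s z w = eval3 E s z w.

Lemma mpoly_fun_ext f g :
  mpoly_fun f -> (forall s z w, f s z w = g s z w) -> mpoly_fun g.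
Proof. by move=> [E fE] fg; exists E => s z w; rewrite -fg. Qed.

Lemma mpoly_fun_cst c : mpoly_fun (fun _ _ _ => c).
Proof. by exists c%:MP => s z w; rewrite /eval3 mevalC. Qed.

Lemma mpoly_fun_s : mpoly_fun (fun s _ _ => s).
Proof. by exists 'X_(0 : 'I_3) => s z w; rewrite /eval3 mevalXU. Qed.

Lemma mpoly_fun_z : mpoly_fun (fun _ z _ => z).
Proof. by exists 'X_(1 : 'I_3) => s z w; rewrite /eval3 mevalXU. Qed.

Lemma mpoly_fun_w : mpoly_fun (fun _ _ w => w).
Proof. by exists 'X_(2 : 'I_3) => s z w; rewrite /eval3 mevalXU. Qed.

Lemma mpoly_funD f g :
  mpoly_fun f -> mpoly_fun g -> mpoly_fun (fun s z w => f s z w + g s z w).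
Proof.
by move=> [E fE] [F gF]; exists (E + F) => s z w; rewrite /eval3 mevalD fE gF.
Qed.

Lemma mpoly_funM f g :
  mpoly_fun f -> mpoly_fun g -> mpoly_fun (fun s z w => f s z w * g s z w).
Proof.
by move=> [E fE] [F gF]; exists (E * F) => s z w; rewrite /eval3 mevalM fE gF.
Qed.

Lemma mpoly_fun_horner (P : {poly C}) f :
  mpoly_fun f -> mpoly_fun (fun s z w => P.[f s z w]).
Proof.
move=> mf; elim/poly_ind: P => [|P c IH].
  by apply: mpoly_fun_ext (mpoly_fun_cst 0) _ => s z w; rewrite horner0.
apply: mpoly_fun_ext (mpoly_funD (mpoly_funM IH mf) (mpoly_fun_cst c)) _.
by move=> s z w; rewrite hornerMXaddC.
Qed.

Lemma mpoly_fun_qiter (q : {poly C}) k : mpoly_fun (fun _ _ w => qiter q k w).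
Proof.
elim: k => [|k IH]; first exact: mpoly_fun_w.
exact: mpoly_fun_horner q _ IH.
Qed.

End PolynomialFunctions.

Section Iterates.

Variables (C : numClosedFieldType) (p : {poly C}).

Lemma piter1 : piter p 1 = p.
Proof. exact: comp_polyXr. Qed.

Lemma piterD a b : piter p (a + b) = piter p a \Po piter p b.
Proof.
elim: a => [|a IH]; first by rewrite comp_polyX.
by rewrite addSn /piter !iterS -/(piter p _) IH comp_polyA.
Qed.

Lemma horner_piterD a b x :
  (piter p (a + b)).[x] = (piter p a).[(piter p b).[x]].
Proof. by rewrite piterD horner_comp. Qed.

Lemma deriv_piterD a b x :
  (piter p (a + b))^`().[x] = (piter p a)^`().[(piter p b).[x]] * (piter p b)^`().[x].
Proof. by rewrite piterD deriv_comp hornerM horner_comp. Qed.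

Lemma bcoefS k j : (j < k)%N ->
  bcoef p k.+1 j = p^`().[(piter p k).[0]] * bcoef p k j.
Proof.
move=> ltjk; rewrite /bcoef.
have -> : (k.+1 - j - 1 = 1 + (k - j - 1))%N by lia.
rewrite deriv_piterD piter1 -horner_piterD.
by have -> : (k - j - 1 + j.+1 = k)%N by lia.
Qed.

Lemma bcoef_last k : bcoef p k.+1 k = 1.
Proof. by rewrite /bcoef subSnn subnn /piter /= derivX hornerC. Qed.

End Iterates.

Section FixedIterate.

Variables (C : numClosedFieldType) (p : {poly C}) (m : nat).
Hypothesis piter_m0 : (piter p m).[0] = 0.

Lemma piter_mul0 n : (piter p (n * m)).[0] = 0.
Proof. by elim: n => [|n IH]; rewrite ?hornerX // mulSn horner_piterD IH. Qed.

Lemma deriv_piter_mul0 n :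
  (piter p (n * m))^`().[0] = (piter p m)^`().[0] ^+ n.
Proof.
elim: n => [|n IH]; first by rewrite derivX hornerC.
by rewrite mulSn deriv_piterD piter_mul0 IH exprS.
Qed.

Lemma bcoef_block l i n : (i < m)%N -> (n < l)%N ->
  bcoef p (m * l) (i + n * m) = (piter p m)^`().[0] ^+ (l - 1 - n) * bcoef p m i.
Proof.
move=> lt_im lt_nl; rewrite /bcoef.
have -> : (m * l - (i + n * m) - 1 = (l - 1 - n) * m + (m - i - 1))%N.
  have [r ->] : exists r, l = (n.+1 + r)%N by exists (l - n.+1)%N; lia.
  nia.
rewrite deriv_piterD -addSn horner_piterD piter_mul0 -horner_piterD.
have -> : (m - i - 1 + i.+1 = m)%N by lia.
by rewrite piter_m0 deriv_piter_mul0.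
Qed.

Lemma sum_bcoef_blocks l (a : nat -> C) :
  \sum_(j < m * l) bcoef p (m * l) j * a j =
  \sum_(i < m) bcoef p m i *
    \sum_(k < l) (piter p m)^`().[0] ^+ k * a (i + (l - 1 - k) * m)%N.
Proof.
rewrite (sum_ord_mul _ _ (fun j => bcoef p (m * l) j * a j)); apply: eq_bigr => i _.
rewrite mulr_sumr (reindex_inj rev_ord_inj) /=; apply: eq_bigr => k _.
rewrite bcoef_block ?rev_ord_proof //.
have [-> ->] : (l - 1 - (l - k.+1) = k /\ l - k.+1 = l - 1 - k)%N.
  by have := ltn_ord k; lia.
by rewrite mulrCA mulrA.
Qed.

End FixedIterate.

Section ConjugatedMap.

Variables (C : numClosedFieldType) (p q : {poly C}) (eps : C).

Definition lin_part k (z w : C) : C :=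
  (piter p k)^`().[0] * z + eps * \sum_(j < k) bcoef p k j * qiter q j w.

Lemma lin_partS k z w :
  lin_part k.+1 z w = p^`().[(piter p k).[0]] * lin_part k z w + eps * qiter q k w.
Proof.
have deriv_S : (piter p k.+1)^`().[0] = p^`().[(piter p k).[0]] * (piter p k)^`().[0].
  by rewrite -add1n deriv_piterD piter1.
rewrite /lin_part big_ord_recr /= bcoef_last mul1r deriv_S.
rewrite (eq_bigr (fun j : 'I_k => p^`().[(piter p k).[0]] * (bcoef p k j * qiter q j w))).
  by rewrite -mulr_sumr; ring.
by move=> j _; rewrite bcoefS // mulrA.
Qed.

Lemma mpoly_fun_lin_part k : mpoly_fun (fun _ z w => lin_part k z w).
Proof.
elim: k => [|k IH].
  apply: mpoly_fun_ext (mpoly_fun_z C) _ => s z w.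
  by rewrite /lin_part /piter /= derivX hornerC big_ord0 mulr0 addr0 mul1r.
apply: mpoly_fun_ext (mpoly_funD (mpoly_funM (mpoly_fun_cst _) IH)
                        (mpoly_funM (mpoly_fun_cst eps) (mpoly_fun_qiter q k))) _.
by move=> s z w; rewrite lin_partS.
Qed.

Lemma iter_gmap k : exists E : {mpoly C[3]}, forall s z w, s != 0 ->
  iter k (gmap p q eps s) (z, w) =
  ((piter p k).[0] / s + lin_part k z w + s * eval3 E s z w, qiter q k w).
Proof.
elim: k => [|k [E hE]].
  exists 0 => s z w _; rewrite /eval3 meval0 /lin_part /piter /= hornerX derivX.
  by rewrite hornerC big_ord0 mul0r mul1r !mulr0 !add0r !addr0.
set c := (piter p k).[0].
have [u hu] := horner_taylor2 p c.
pose R s z w := lin_part k z w + s * eval3 E s z w.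
have mR : mpoly_fun R.
  by apply: mpoly_funD (mpoly_fun_lin_part k) (mpoly_funM (mpoly_fun_s C) _); exists E.
have [F hF] : mpoly_fun (fun s z w =>
    eval3 E s z w * p^`().[c] + R s z w * R s z w * u.[c + s * R s z w]).
  apply: mpoly_funD; first by apply: mpoly_funM (mpoly_fun_cst _); exists E.
  apply: mpoly_funM (mpoly_funM mR mR) (mpoly_fun_horner u _).
  exact: mpoly_funD (mpoly_fun_cst c) (mpoly_funM (mpoly_fun_s C) mR).
exists F => s z w s0.
rewrite iterS hE // /gmap /phiinv /fmap /phimap /= -hF.
have -> : s * (c / s + lin_part k z w + s * eval3 E s z w) = c + s * R s z w.
  by rewrite /R; field.
have -> : (piter p k.+1).[0] = p.[c] by rewrite -horner_comp.
rewrite hu lin_partS -/c /R; congr (_, _); field; exact: s0.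
Qed.

End ConjugatedMap.

Theorem proposition4p2 (C : numClosedFieldType) (p q : {poly C})
  (m0 t0 : nat) (eps : C) :
  (2 < size p)%N ->
  periodic0 p m0 ->
  (1 <= t0)%N ->
  eps != 0 ->
  forall l : nat, (1 <= l)%N ->
  exists E : {mpoly C[3]},
    forall s z w : C, s != 0 -> `|s| < 1 ->
      iter (m0 * t0 * l) (gmap p q eps s) (z, w) =
      ((multiplier p m0) ^+ (t0 * l) * z
       + eps * \sum_(i < m0 * t0)
                 bcoef p (m0 * t0) i *
                 \sum_(k < l) (multiplier p m0) ^+ (t0 * k) *
                     qiter q (i + (l - 1 - k) * (m0 * t0)) w
       + s * eval3 E s z w,
       qiter q (m0 * t0 * l) w).
Proof.
(* Only p^m0(0) = 0 is used. *)
move=> _ [_ [piter_m0 _]] _ _ l _.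
set m1 := (m0 * t0)%N; set rho := multiplier p m0.
have piter_m1 : (piter p m1).[0] = 0 by rewrite /m1 mulnC piter_mul0.
have deriv_m1 : (piter p m1)^`().[0] = rho ^+ t0 by rewrite /m1 mulnC deriv_piter_mul0.
have [E hE] := iter_gmap p q eps (m1 * l).
exists E => s z w s0 _.
rewrite hE // /lin_part (sum_bcoef_blocks piter_m1 l (qiter q ^~ w)) deriv_m1.
rewrite [(m1 * l)%N]mulnC piter_mul0 // deriv_piter_mul0 // deriv_m1 -exprM.
rewrite mul0r add0r.
by under eq_bigr => i _ do under eq_bigr => k _ do rewrite -exprM.
Qed.
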